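(* The saturation of a finite sample set is finite.
   Context: Fix a countably infinite set of term variables $x,y,z,\dots$ and a countably infinite set of time variables $\kappa,\kappa',\dots$. Basic terms are given by the grammar $t,u::= x\mid tu\mid t^{o}\mid t^{\ell}\mid t^{r}\mid \mathrm{id}\mid\bot$ (purely syntactic). Samples are given by the grammar $\alpha::=\kappa\mid t[\alpha]\mid \mathsf{s}(\alpha)\mid\mathsf{p}(\alpha)\mid\mathsf{last}(t)$, where $\kappa$ ranges over time variables and $t$ over basic terms. Let $\leadsto$ be the relation on samples given by, for all basic terms $t,u$ and samples $\alpha$: $t[\alpha]\leadsto\alpha$; $\mathsf{s}(\alpha)\leadsto\alpha$; $\mathsf{p}(\alpha)\leadsto\alpha$; $(tu)[\alpha]\leadsto t[u[\alpha]]$; $t^{o}[\alpha]\leadsto t[\alpha]$; $t^{r}[\alpha]\leadsto t[t^{r}[\alpha]]$ and $t^{r}[\alpha]\leadsto t[\mathsf{s}(t^{r}[\alpha])]$; $t^{\ell}[\alpha]\leadsto t[t^{\ell}[\alpha]]$ and $t^{\ell}[\alpha]\leadsto t[\mathsf{p}(t^{\ell}[\alpha])]$; $t[\alpha]\leadsto t[\mathsf{last}(t)]$. The saturation of a set $\Delta$ of samples is $\{\beta\mid\exists\alpha\in\Delta,\ \alpha\leadsto^{*}\beta\}$, where $\leadsto^{*}$ is the reflexive transitive closure of $\leadsto$. *)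

From Stdlib Require Import List Relations.
Import ListNotations.

Definition tvar := nat.
Definition timevar := nat.

(* Basic terms: t,u ::= x | t u | t^o | t^l | t^r | id | bot *)
Inductive bterm : Type :=
| BVar : tvar -> bterm
| BApp : bterm -> bterm -> bterm
| BO : bterm -> bterm
| BL : bterm -> bterm
| BR : bterm -> bterm
| BId : bterm
| BBot : bterm.

(* Samples: alpha ::= kappa | t[alpha] | s(alpha) | p(alpha) | last(t) *)
Inductive sample : Type :=
| STime : timevar -> sample
| SAt : bterm -> sample -> sample
| SS : sample -> sample
| SP : sample -> sample
| SLast : bterm -> sample.

Inductive step : sample -> sample -> Prop :=
| st_at : forall t a, step (SAt t a) a
| st_s : forall a, step (SS a) a
| st_p : forall a, step (SP a) a
| st_app : forall t u a, step (SAt (BApp t u) a) (SAt t (SAt u a))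
| st_o : forall t a, step (SAt (BO t) a) (SAt t a)
| st_r1 : forall t a, step (SAt (BR t) a) (SAt t (SAt (BR t) a))
| st_r2 : forall t a, step (SAt (BR t) a) (SAt t (SS (SAt (BR t) a)))
| st_l1 : forall t a, step (SAt (BL t) a) (SAt t (SAt (BL t) a))
| st_l2 : forall t a, step (SAt (BL t) a) (SAt t (SP (SAt (BL t) a)))
| st_last : forall t a, step (SAt t a) (SAt t (SLast t)).

Definition steps : sample -> sample -> Prop := clos_refl_trans sample step.

Definition saturation (Delta : sample -> Prop) : sample -> Prop :=
  fun b => exists a, Delta a /\ steps a b.

Definition finite_set (S : sample -> Prop) : Prop :=
  exists l : list sample, forall b, S b -> In b l.

(* Every sample a has a finite list [closure a] that contains a and is closed
   under ~>.  Rewriting t[b] only produces samples u[c] with u a subterm of t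
   and c among b, the r/l-samples s(u^r[c]), p(u^l[c]) created on the way, and
   last(u); the samples reachable from the u[last(u)] again form a finite
   ~>-closed family depending on t alone.  The saturation of Delta is then
   contained in the union of the closures of the elements of Delta. *)

From Stdlib Require Import List Relations.
Import ListNotations.

(* The samples met while rewriting t[b], before leaving to b or to last(_). *)
Fixpoint unfold (t : bterm) (b : sample) : list sample :=
  SAt t b :: match t with
  | BApp t1 t2 => unfold t1 (SAt t2 b) ++ unfold t2 b
  | BO t1 => unfold t1 b
  | BR t1 => SS (SAt (BR t1) b) ::
               unfold t1 (SAt (BR t1) b) ++ unfold t1 (SS (SAt (BR t1) b))
  | BL t1 => SP (SAt (BL t1) b) ::
               unfold t1 (SAt (BL t1) b) ++ unfold t1 (SP (SAt (BL t1) b))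
  | _ => []
  end.

Fixpoint last_closure (t : bterm) : list sample :=
  unfold t (SLast t) ++ SLast t :: match t with
  | BApp t1 t2 => last_closure t1 ++ last_closure t2
  | BO t1 | BR t1 | BL t1 => last_closure t1
  | _ => []
  end.

Fixpoint closure (a : sample) : list sample :=
  match a with
  | SAt t b => unfold t b ++ last_closure t ++ closure b
  | SS b => SS b :: closure b
  | SP b => SP b :: closure b
  | _ => [a]
  end.

Definition step_closed (l : list sample) : Prop :=
  forall g g', In g l -> step g g' -> In g' l.

Lemma step_closed_steps l a b : step_closed l -> In a l -> steps a b -> In b l.
Proof.
  intros Hl Ha Hab.
  induction Hab as [| g g' _ Hg Hs] using clos_refl_trans_ind_left; eauto.
Qed.

Lemma unfold_head t b : In (SAt t b) (unfold t b).
Proof. destruct t; left; reflexivity. Qed.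

Lemma last_closure_unfold t g :
  In g (unfold t (SLast t)) -> In g (last_closure t).
Proof. intro Hg; destruct t; apply in_or_app; left; exact Hg. Qed.

Lemma last_closure_last t : In (SLast t) (last_closure t).
Proof. destruct t; apply in_or_app; right; left; reflexivity. Qed.

Lemma last_closure_head t : In (SAt t (SLast t)) (last_closure t).
Proof. apply last_closure_unfold, unfold_head. Qed.

Lemma closure_self a : In a (closure a).
Proof. destruct a; simpl; auto using in_or_app, unfold_head. Qed.

Ltac in_list :=
  simpl; repeat (rewrite ?in_app_iff; simpl);
  auto 30 using unfold_head, last_closure_head.

Ltac case_in H :=
  repeat progress (rewrite ?in_app_iff in H; cbn [In] in H);
  repeat match type of H with _ \/ _ => destruct H as [H | H] end;
  try contradiction; try subst.

Lemma unfold_step t : forall b g g', In g (unfold t b) -> step g g' ->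
  In g' (unfold t b) \/ g' = b \/ In g' (last_closure t).
Proof.
  induction t; intros b g g' Hg Hs; cbn [unfold] in Hg; case_in Hg;
    try (inversion Hs; subst; in_list; fail).
  all: match goal with
       | IH : forall b g g', In g (unfold ?u b) -> _, H : In _ (unfold ?u _) |- _ =>
           destruct (IH _ _ _ H Hs) as [? | [-> | ?]]; in_list
       end.
Qed.

Lemma last_closure_step_closed t : step_closed (last_closure t).
Proof.
  unfold step_closed; induction t; intros g g' Hg Hs; cbn [last_closure] in Hg;
    case_in Hg; try (inversion Hs; fail).
  all: first
    [ destruct (unfold_step _ _ _ _ Hg Hs) as [? | [-> | ?]];
        auto using last_closure_unfold, last_closure_last
    | match goal with
      | IH : forall g g', In g (last_closure ?u) -> _, H : In _ (last_closure ?u) |- _ =>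
          specialize (IH _ _ H Hs); in_list
      end ].
Qed.

Lemma closure_step_closed a : step_closed (closure a).
Proof.
  unfold step_closed; induction a; intros g g' Hg Hs; simpl in Hg |- *.
  - destruct Hg as [<- | []]; inversion Hs.
  - rewrite !in_app_iff in Hg |- *. destruct Hg as [Hg | [Hg | Hg]].
    + destruct (unfold_step _ _ _ _ Hg Hs) as [? | [-> | ?]];
        auto using closure_self.
    + right; left; exact (last_closure_step_closed _ _ _ Hg Hs).
    + eauto.
  - destruct Hg as [<- | Hg]; [inversion Hs; subst; right; apply closure_self | eauto].
  - destruct Hg as [<- | Hg]; [inversion Hs; subst; right; apply closure_self | eauto].
  - destruct Hg as [<- | []]; inversion Hs.
Qed.

Theorem lemma3p5 (Delta : sample -> Prop) :
  finite_set Delta -> finite_set (saturation Delta).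
Proof.
  intros [l Hl]. exists (flat_map closure l).
  intros b [a [Ha Hab]]. apply in_flat_map.
  exists a; split; [apply Hl, Ha |].
  exact (step_closed_steps _ _ _ (closure_step_closed a) (closure_self a) Hab).
Qed.
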